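(* Let $\mathcal{M}\subset\mathbb{R}^d$ be a set of $n$ distinct points with the Euclidean metric, $k$ an integer with $2\le k<n$, and $0<\epsilon<\tfrac12$. Let $\epsilon_1=\frac{\epsilon}{3+2\epsilon}$, let $P_1$ be the output of the farthest-point-insertion procedure on $(\mathcal{M},k)$ (choose $q_1,q_2\in\mathcal{M}$ realizing $\operatorname{diam}(\mathcal{M})$, set $S_2=\{q_1,q_2\}$, and for $i=2,\dots,k-1$ add a point of $\mathcal{M}$ maximizing $\delta(\cdot,S_i)$), and let $\epsilon_2=\frac{\epsilon_1R_{P_1}}{2\sqrt d}$. Consider an axis-parallel grid in $\mathbb{R}^d$ of cubic cells of side length $\epsilon_2$. Then the number of grid cells that intersect $\mathcal{M}$ is $O\!\left(k\lceil 1/\epsilon_1\rceil^d\right)$, where the implied constant depends only on $d$.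
   Context: For a finite nonempty $S\subset\mathcal{M}$, $\delta(x,S)=\min_{s\in S}\|x-s\|$ and $R_S=\max_{x\in\mathcal{M}}\delta(x,S)$. *)

From HB Require Import structures.
From mathcomp Require Import all_boot all_order all_algebra.
From mathcomp Require Import reals.
Set Implicit Arguments. Unset Strict Implicit. Unset Printing Implicit Defensive.
Import Order.TTheory GRing.Theory Num.Theory.
Local Open Scope ring_scope.

Section Defs.
Variables (R : realType) (d : nat).
Notation pt := 'rV[R]_d.

Definition edist (x y : pt) : R := Num.sqrt (\sum_(i < d) (x 0 i - y 0 i) ^+ 2).

(* delta(x,S) = min_{s in S} ||x - s||  (meaningful for nonempty S) *)
Definition delta (x : pt) (S : seq pt) : R :=
  \big[Num.min/edist x (head x S)]_(s <- S) edist x s.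

(* R_S = max_{x in M} delta(x,S) (distances are >= 0, M nonempty) *)
Definition covrad (M S : seq pt) : R := \big[Num.max/0]_(x <- M) delta x S.

(* P is a possible output of farthest-point insertion on (M,k):
   P = [q1; q2; p3; ...; pk], q1,q2 realize diam(M), and each subsequent
   point maximizes delta(., S_i) over M, where S_i = first i points. *)
Definition fpi_output (M : seq pt) (k : nat) (P : seq pt) : Prop :=
  [/\ size P = k, {subset P <= M},
      (forall x y, x \in M -> y \in M -> edist x y <= edist (nth 0 P 0) (nth 0 P 1)) &
      (forall i, (2 <= i < k)%N -> forall x, x \in M ->
          delta x (take i P) <= delta (nth 0 P i) (take i P))].

(* index of the half-open grid cell
   prod_i [o_i + s z_i, o_i + s (z_i + 1)) containing x *)
Definition cell_index (o : pt) (s : R) (x : pt) : 'rV[int]_d :=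
  \row_i Num.floor ((x 0 i - o 0 i) / s).

Definition num_cells (o : pt) (s : R) (M : seq pt) : nat :=
  size (undup [seq cell_index o s x | x <- M]).

End Defs.

From HB Require Import structures.
From mathcomp Require Import all_boot all_order all_algebra.
From mathcomp Require Import reals.
From mathcomp Require Import ring lra.
Set Implicit Arguments. Unset Strict Implicit. Unset Printing Implicit Defensive.
Import Order.TTheory GRing.Theory Num.Theory.
Local Open Scope ring_scope.

(* Every point
   x of M lies within R := R_{P1} of a centre p of P1, so along each axis the
   cell index of x lies in a window of at most 2 R/eps2 + 1 consecutive
   integers starting at an integer determined by p; hence every occupied cell
   is determined by a centre and an offset vector, giving at most
   k (2 R/eps2 + 1)^d cells.  Finally 2 R/eps2 = 4 sqrt d / eps1 is at most
   4 d ceil(1/eps1). *)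

Lemma bigmin_seq_attained (R : realDomainType) (T : eqType) (f : T -> R) v
    (S : seq T) :
  \big[Num.min/v]_(s <- S) f s = v \/
  exists2 p, p \in S & \big[Num.min/v]_(s <- S) f s = f p.
Proof.
elim: S => [|a S IH]; first by left; rewrite big_nil.
rewrite big_cons {1 3}/Order.min; case: ifP => _.
  by right; exists a; rewrite ?mem_head.
case: IH => [->|[p pS ->]]; first by left.
by right; exists p => //; rewrite in_cons pS orbT.
Qed.

Section Distances.
Variables (R : realType) (d : nat).
Implicit Types (x y : 'rV[R]_d) (S M : seq 'rV[R]_d).

Lemma edist_ge0 x y : 0 <= edist x y.
Proof. exact: sqrtr_ge0. Qed.

Lemma ler_coord_edist x y i : `|x 0 i - y 0 i| <= edist x y.
Proof.
rewrite /edist -sqrtr_sqr; apply: ler_wsqrtr.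
by rewrite (bigD1 i) //= lerDl; apply: sumr_ge0 => j _; exact: sqr_ge0.
Qed.

Lemma delta_attained x S :
  S != [::] -> exists2 p, p \in S & delta x S = edist x p.
Proof.
case: S => [//|a S] _; rewrite /delta /=.
case: (bigmin_seq_attained (edist x) (edist x a) (a :: S)) => [->|//].
by exists a; rewrite ?mem_head.
Qed.

Lemma delta_ge0 x S : 0 <= delta x S.
Proof.
rewrite /delta; apply: (big_ind (fun r : R => 0 <= r)) => [|a b ha hb|s _].
- exact: edist_ge0.
- by rewrite le_min ha.
- exact: edist_ge0.
Qed.

Lemma covrad_ge0 M S : 0 <= covrad M S.
Proof.
rewrite /covrad; apply: (big_ind (fun r : R => 0 <= r)) => // [a b ha hb|x _].
  by rewrite le_max ha.
exact: delta_ge0.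
Qed.

Lemma delta_le_covrad M S x : x \in M -> delta x S <= covrad M S.
Proof. by move=> xM; exact: (le_bigmax_seq 0 x xpredT (fun y => delta y S) xM). Qed.

Lemma exists_center_le_covrad M S x :
  S != [::] -> x \in M -> exists2 p, p \in S & edist x p <= covrad M S.
Proof.
move=> S0 xM; have [p pS dp] := delta_attained x S0.
by exists p; rewrite // -dp delta_le_covrad.
Qed.

End Distances.

Lemma floor_in_window (R : realType) (y a r : R) (N : nat) :
  `|y - a| <= r -> 2 * r + 1 <= N%:R ->
  exists j : 'I_N, Num.floor y = Num.floor (a - r) + (j : nat)%:Z.
Proof.
rewrite ler_norml => /andP[ya_lo ya_hi] rN.
have le_fl : Num.floor (a - r) <= Num.floor y by apply: le_floor; lra.
set j := `|Num.floor y - Num.floor (a - r)|%N.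
have jE : j%:Z = Num.floor y - Num.floor (a - r) by rewrite gez0_abs ?subr_ge0.
have jN : (j < N)%N.
  rewrite -(ltr_nat R) -[j%:R]/(j%:Z%:~R : R) jE intrB.
  have := floor_le y; have := floorD1_gt (a - r); rewrite intrD; lra.
by exists (Ordinal jN); rewrite /= jE addrCA subrr addr0.
Qed.

Section CellCount.
Variables (R : realType) (d : nat) (o : 'rV[R]_d) (s : R).
Implicit Types (M S : seq 'rV[R]_d).

Lemma num_cells_side0 M : s = 0 -> (num_cells o s M <= 1)%N.
Proof.
move=> ->; rewrite /num_cells.
apply: (leq_trans (uniq_leq_size (undup_uniq _) (s2 := [:: 0]) _)) => // z.
rewrite mem_undup => /mapP[x _ ->]; rewrite inE /cell_index.
by apply/eqP/rowP => i; rewrite !mxE invr0 mulr0 floor0.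
Qed.

Hypothesis s_gt0 : 0 < s.

Let cell_corner (p : 'rV[R]_d) (r : R) (f : {ffun 'I_d -> nat}) : 'rV[int]_d :=
  \row_i (Num.floor ((p 0 i - o 0 i) / s - r) + (f i)%:Z).

Lemma cell_index_in_window (p x : 'rV[R]_d) (r : R) (N : nat) :
  edist x p <= r * s -> 2 * r + 1 <= N%:R ->
  exists f : {ffun 'I_d -> 'I_N},
    cell_index o s x = cell_corner p r [ffun i => (f i : nat)].
Proof.
move=> xp rN.
have win i : exists j : 'I_N, Num.floor ((x 0 i - o 0 i) / s) =
    Num.floor ((p 0 i - o 0 i) / s - r) + (j : nat)%:Z.
  apply: floor_in_window rN.
  rewrite -mulrBl (_ : x 0 i - o 0 i - _ = x 0 i - p 0 i); last by ring.
  rewrite normrM [`|s^-1|]gtr0_norm ?invr_gt0 // ler_pdivrMr //.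
  exact: le_trans (ler_coord_edist x p i) xp.
have [f fE] := fin_all_exists win.
by exists [ffun i => f i]; apply/rowP => i; rewrite !mxE !ffunE.
Qed.

Lemma num_cells_le M S (N : nat) :
  S != [::] -> 2 * (covrad M S / s) + 1 <= N%:R ->
  (num_cells o s M <= size S * N ^ d)%N.
Proof.
move=> S0 rN; set r := covrad M S / s.
pose g (jf : 'I_(size S) * {ffun 'I_d -> 'I_N}) :=
  cell_corner S`_jf.1 r [ffun i => (jf.2 i : nat)].
apply: (leq_trans (uniq_leq_size (undup_uniq _) (s2 := codom g) _)); last first.
  by rewrite size_codom card_prod card_ffun !card_ord.
move=> z; rewrite mem_undup => /mapP[x xM ->].
have [p pS xp] := exists_center_le_covrad S0 xM.
have xp_rs : edist x p <= r * s by rewrite /r divfK ?gt_eqF.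
have [f ->] := cell_index_in_window xp_rs rN.
have pi : (index p S < size S)%N by rewrite index_mem.
apply/codomP; exists (Ordinal pi, f).
by rewrite /g /= nth_index.
Qed.

End CellCount.

Lemma sqrtr_nat_le (R : realType) (n : nat) : Num.sqrt (n%:R) <= n%:R :> R.
Proof.
rewrite -{2}(ger0_norm (ler0n R n)) -sqrtr_sqr ler_sqrt ?sqr_ge0 //.
by rewrite -natrX ler_nat; case: n => // n; rewrite leq_pmulr.
Qed.

Lemma window_width_le (R : realType) (n m : nat) (e : R) :
  0 < e -> e^-1 <= m%:R -> 4 * Num.sqrt (n%:R) / e + 1 <= ((4 * n + 2) * m)%:R.
Proof.
move=> e_gt0 em; have m_ge1 : 1 <= m%:R :> R.
  by rewrite ler1n -(ltr0n R); apply: lt_le_trans em; rewrite invr_gt0.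
have sqrt_le : Num.sqrt (n%:R) / e <= n%:R * m%:R.
  by apply: ler_pM; rewrite ?sqrtr_ge0 ?invr_ge0 ?(ltW e_gt0) ?sqrtr_nat_le.
rewrite natrM natrD natrM -mulrA; nra.
Qed.

Theorem lemma6 (R : realType) (d : nat) :
  exists C : R, forall (M : seq 'rV[R]_d) (k : nat) (eps : R) (P1 : seq 'rV[R]_d)
    (o : 'rV[R]_d),
    uniq M -> (2 <= k)%N -> (k < size M)%N -> 0 < eps -> eps < 1 / 2 ->
    fpi_output M k P1 ->
    let eps1 := eps / (3 + 2 * eps) in
    let eps2 := eps1 * covrad M P1 / (2 * Num.sqrt (d%:R)) in
    (num_cells o eps2 M)%:R <= C * k%:R * ((Num.ceil (1 / eps1))%:~R) ^+ d.
Proof.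
exists ((4 * d + 2) ^ d)%N%:R => M k eps P o _ k_ge2 _ eps_gt0 _ [sizeP _ _ _].
cbv zeta; set eps1 := eps / _; set eps2 := eps1 * _ / _.
have eps1_gt0 : 0 < eps1 by rewrite divr_gt0 //; lra.
have [m ceilE] : exists m : nat, Num.ceil (1 / eps1) = m%:Z.
  exists `|Num.ceil (1 / eps1)|%N; rewrite gez0_abs // ceil_ge0.
  by have := divr_gt0 ltr01 eps1_gt0; lra.
have inv_le_m : eps1^-1 <= m%:R by rewrite -div1r -[m%:R]/(m%:Z%:~R : R) -ceilE ceil_ge.
rewrite ceilE -[m%:Z%:~R]/(m%:R : R) -natrX -!natrM ler_nat.
rewrite mulnAC -expnMn [X in (_ <= X)%N]mulnC.
have [eps2_0|eps2_neq0] := eqVneq eps2 0.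
  apply: leq_trans (num_cells_side0 o M eps2_0) _.
  have m_gt0 : (0 < m)%N.
    by rewrite -(ltr0n R); apply: lt_le_trans inv_le_m; rewrite invr_gt0.
  by rewrite muln_gt0 (leq_trans _ k_ge2) // expn_gt0 muln_gt0 m_gt0 addn2.
have sqrt_neq0 : Num.sqrt (d%:R) != 0 :> R.
  by apply: contraNneq eps2_neq0 => h; rewrite /eps2 h mulr0 invr0 mulr0.
have covrad_neq0 : covrad M P != 0.
  by apply: contraNneq eps2_neq0 => h; rewrite /eps2 h mulr0 mul0r.
have eps2_gt0 : 0 < eps2.
  rewrite lt0r eps2_neq0 divr_ge0 ?(mulr_ge0 (ltW eps1_gt0)) ?covrad_ge0 //.
  by rewrite mulr_ge0 ?sqrtr_ge0.
have P_neq0 : P != [::] by rewrite -size_eq0 sizeP -lt0n (leq_trans _ k_ge2).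
rewrite -sizeP; apply: num_cells_le => //.
have -> : 2 * (covrad M P / eps2) = 4 * Num.sqrt (d%:R) / eps1.
  by rewrite /eps2; field; rewrite sqrt_neq0 covrad_neq0 gt_eqF.
exact: window_width_le eps1_gt0 inv_le_m.
Qed.
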